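(* Let $G$ be a simple stochastic game, $A$ a subset of its arcs, and $\sigma,\sigma'$ positional MAX strategies. Then $v^{G}_{\sigma'|_A \sigma}(x) = v^{G[A,\sigma]}_{\sigma'}(x)$ for every vertex $x$ of $G$.
   Context: A simple stochastic game (SSG) $G$ is a finite directed graph whose vertex set is partitioned into MAX vertices, MIN vertices, random vertices and a nonempty set of sinks; every non-sink vertex has at least one outgoing arc, every sink has exactly one outgoing arc, a self-loop; each random vertex $x$ carries a rational probability distribution $p_x$ on its out-neighbourhood, positive on every out-neighbour; each sink $s$ has rational value $\mathrm{Val}(s)\in[0,1]$. A history is a finite directed path; a general MAX (resp. MIN) strategy maps each history ending in a MAX (resp. MIN) vertex $x$ to an out-neighbour of $x$; it is positional if it depends only on the last vertex. Under strategies $\sigma,\tau$ from start $x_0$, the random play is built step by step: at a MAX (MIN) vertex the next vertex is $\sigma$ (resp. $\tau$) applied to the history so far, at a random vertex $x$ it is drawn according to $p_x$ independently, and at a sink the play stays there. The play's value is $\mathrm{Val}(s)$ if it reaches sink $s$, else $0$; $v^G_{\sigma,\tau}(x_0)$ is its expectation. For a MAX strategy $\sigma$, $v^G_\sigma$ is the value $v^G_{\sigma,\tau}$ under a best response $\tau$, i.e. a MIN strategy with $v_{\sigma,\tau}\le v_{\sigma,\tau'}$ pointwise for all general MIN strategies $\tau'$ (for positional $\sigma$ a positional best response exists). Concatenation: for MAX strategies $\sigma,\sigma'$ and a set $A$ of arcs, $\sigma'|_A\sigma$ is the (generally non-positional) MAX strategy that plays like $\sigma'$ until an arc of $A$ is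 crossed, and from then on plays like $\sigma$. Transformed game: $G[A,\sigma]$ is obtained from a copy of $G$ by replacing each arc $e=(x,y)\in A$ by an arc $(x,s_e)$ to a new sink $s_e$ of value $v^G_\sigma(y)$ (for random $x$, $p_x(s_e)=p_x(y)$); $y$ is kept. Positional strategies of $G$ are identified with those of $G[A,\sigma]$ (a MAX vertex $x$ with $\sigma'(x)=y$, $(x,y)\in A$, moves to $s_{(x,y)}$). *)

From HB Require Import structures.
From mathcomp Require Import all_boot all_order all_algebra.
From mathcomp Require Import all_classical all_reals.
Set Implicit Arguments. Unset Strict Implicit. Unset Printing Implicit Defensive.
Import Order.TTheory GRing.Theory Num.Theory.
Local Open Scope ring_scope.
Local Open Scope classical_set_scope.

Inductive vkind := VMax | VMin | VRand | VSink.

(** A game on the finite vertex type [V], with numeric data in [K]: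
    kind of each vertex, the arc relation, the probabilities [prob x y]
    (used only for random [x] and arcs [(x,y)]) and sink values
    (used only for sinks). *)
Record game (K : Type) (V : finType) := Game {
  kind : V -> vkind;
  arc  : rel V;
  prob : V -> V -> K;
  sval : V -> K }.

Definition ssg (V : finType) := game rat V.

Definition ssg_wf (V : finType) (G : ssg V) : Prop :=
  [/\ exists s, kind G s = VSink,
      forall x, kind G x <> VSink -> exists y, arc G x y,
      forall s, kind G s = VSink -> forall y, arc G s y = (y == s),
      forall x, kind G x = VRand ->
        (forall y, arc G x y -> 0 < prob G x y) /\
        \sum_(y | arc G x y) prob G x y = 1
    & forall s, kind G s = VSink -> 0 <= sval G s <= 1].

Definition arcs (K : Type) (V : finType) (G : game K V) : {set V * V} :=
  [set e | arc G e.1 e.2].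

Definition realize (R : realType) (V : finType) (G : ssg V) : game R V :=
  Game (kind G) (arc G) (fun x y => ratr (prob G x y)) (fun x => ratr (sval G x)).

(** General strategies: a history [x0 :: s] (a finite directed path
    x0, s_1, ..., s_k) is represented by its start [x0] and the list [s];
    its last vertex is [last x0 s]. *)
Definition strategy (V : finType) := V -> seq V -> V.

Definition max_strategy (K : Type) (V : finType) (G : game K V) (st : strategy V) :=
  forall x0 s, path (arc G) x0 s -> kind G (last x0 s) = VMax ->
    arc G (last x0 s) (st x0 s).

Definition min_strategy (K : Type) (V : finType) (G : game K V) (st : strategy V) :=
  forall x0 s, path (arc G) x0 s -> kind G (last x0 s) = VMin ->
    arc G (last x0 s) (st x0 s).

Definition pos_max_strategy (K : Type) (V : finType) (G : game K V) (st : V -> V) :=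
  forall x, kind G x = VMax -> arc G x (st x).

Definition positional (V : finType) (st : V -> V) : strategy V :=
  fun x0 s => st (last x0 s).

Definition trans (R : realType) (V : finType) (G : game R V)
    (sigma tau : strategy V) (x0 : V) (s : seq V) (y : V) : R :=
  let cur := last x0 s in
  match kind G cur with
  | VMax => (sigma x0 s == y)%:R
  | VMin => (tau x0 s == y)%:R
  | VRand => if arc G cur y then prob G cur y else 0
  | VSink => (y == cur)%:R
  end.

(** Probability that the random play from [x0] starts with [x0 :: pre ++ s],
    given that it starts with [x0 :: pre]. *)
Fixpoint hprob (R : realType) (V : finType) (G : game R V)
    (sigma tau : strategy V) (x0 : V) (pre s : seq V) : R :=
  match s with
  | [::] => 1
  | y :: s' => trans G sigma tau x0 pre y * hprob G sigma tau x0 (rcons pre y) s'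
  end.

Definition sink_pay (R : realType) (V : finType) (G : game R V) (x : V) : R :=
  if kind G x is VSink then sval G x else 0.

Definition value_at (R : realType) (V : finType) (G : game R V)
    (sigma tau : strategy V) (x0 : V) (n : nat) : R :=
  \sum_(s : n.-tuple V) hprob G sigma tau x0 [::] s * sink_pay G (last x0 s).

(** Since sinks are
    absorbing, the play reaches sink t iff it is at t at some (all large)
    time n, so the expectation is the (monotone) limit, i.e. the supremum,
    of [value_at n]. *)
Definition play_value (R : realType) (V : finType) (G : game R V)
    (sigma tau : strategy V) (x0 : V) : R :=
  sup (range (value_at G sigma tau x0)).

Definition max_value (R : realType) (V : finType) (G : game R V)
    (sigma : strategy V) (x0 : V) : R :=
  inf [set v | exists tau, min_strategy G tau /\ v = play_value G sigma tau x0].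

Definition hist_arcs (V : finType) (x0 : V) (s : seq V) : seq (V * V) :=
  zip (x0 :: s) s.

Definition concat_strat (V : finType) (A : {set V * V}) (sigma' sigma : V -> V)
    : strategy V :=
  fun x0 s => if has (fun e => e \in A) (hist_arcs x0 s)
              then sigma (last x0 s) else sigma' (last x0 s).

(** Vertices of G[A, sigma]: old vertices and one new sink per arc of A. *)
Definition tvert (V : finType) (A : {set V * V}) : finType :=
  (V + {e : V * V | e \in A})%type.

(** The transformed game G[A, w] where w y = v^G_sigma(y). *)
Definition transform (R : realType) (V : finType) (G : game R V)
    (A : {set V * V}) (w : V -> R) : game R (tvert A) :=
  Game
    (fun u : tvert A => match u with inl x => kind G x | inr _ => VSink end)
    (fun u v : tvert A => match u, v with
       | inl x, inl y => arc G x y && ((x, y) \notin A)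
       | inl x, inr e => (proj1_sig e).1 == x
       | inr e, inr e' => e == e'
       | inr _, inl _ => false end)
    (fun u v : tvert A => match u, v with
       | inl x, inl y => prob G x y
       | inl x, inr e => if (proj1_sig e).1 == x then prob G x (proj1_sig e).2 else 0
       | _, _ => 0 end)
    (fun u : tvert A => match u with
       | inl x => sval G x
       | inr e => w (proj1_sig e).2 end).

Definition lift_pos (V : finType) (A : {set V * V}) (st : V -> V) : tvert A -> tvert A :=
  fun u => match u with
  | inl x => match insub (x, st x) with Some e => inr e | None => inl (st x) end
  | inr e => inr e end.
Arguments lift_pos {V} A st u.

(* Up to its first arc of A, a play of G under sigma'|_A sigma is a play of
   G[A, sigma] under sigma'; at that first arc (x, y) the transformed game stops
   in a sink worth v_sigma(y), whereas G goes on from y under sigma.  A MIN reply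
   in G therefore lifts to one in G[A, sigma] that does no better there, since
   its continuation after the crossing is a reply to sigma from y, worth at least
   v_sigma(y).  Conversely, a MIN reply in G[A, sigma], glued at the first
   crossing into y to an eps-optimal reply to sigma from y, is a reply in G worth
   at most eps more.  Both comparisons are made history by history, by induction
   on the horizon, using the one-step (Bellman) equation for the value of a
   history. *)

From mathcomp Require Import all_boot all_order all_algebra.
From mathcomp Require Import all_classical all_reals.
Set Implicit Arguments. Unset Strict Implicit. Unset Printing Implicit Defensive.
Import Order.TTheory GRing.Theory Num.Theory.
Local Open Scope ring_scope.
Local Open Scope classical_set_scope.

Lemma sum_natr_eq_mul (R : pzSemiRingType) (I : finType) (a : I) (f : I -> R) :
  \sum_i (a == i)%:R * f i = f a.
Proof.
rewrite (bigD1 a) //= eqxx mul1r big1 ?addr0 // => i.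
by rewrite eq_sym => /negbTE ->; rewrite mul0r.
Qed.

Lemma sum_natr_eq (R : pzSemiRingType) (I : finType) (a : I) : \sum_i (a == i)%:R = 1 :> R.
Proof.
by rewrite (eq_bigr (fun i => (a == i)%:R * 1)) ?sum_natr_eq_mul // => i _; rewrite mulr1.
Qed.

Lemma sum_tupleS (R : nmodType) (T : finType) n (F : n.+1.-tuple T -> R) :
  \sum_(u : n.+1.-tuple T) F u = \sum_a \sum_(u : n.-tuple T) F [tuple of a :: u].
Proof.
rewrite pair_big /= (reindex (fun p : T * n.-tuple T => [tuple of p.1 :: p.2])) //.
exists (fun u => (thead u, behead_tuple u)) => [[a u] _ | u _].
  by congr (_, _); apply: val_inj.
by case/tupleP: u => a u; apply: val_inj.
Qed.

Section HistoryValues.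
Variables (R : realType) (W : finType) (H : game R W).

Definition stochastic :=
  [/\ forall x y, kind H x = VRand -> arc H x y -> 0 <= prob H x y,
      forall x, kind H x = VRand -> \sum_y (if arc H x y then prob H x y else 0) = 1
    & forall x, kind H x = VSink -> 0 <= sval H x <= 1].

Definition nonblocking := forall x, kind H x <> VSink -> exists y, arc H x y.

Fixpoint hvalue_at (s t : strategy W) (x0 : W) (pre : seq W) (n : nat) : R :=
  if n is n.+1 then \sum_y trans H s t x0 pre y * hvalue_at s t x0 (rcons pre y) n
  else sink_pay H (last x0 pre).

Definition hvalue (s t : strategy W) (x0 : W) (pre : seq W) : R :=
  sup (range (hvalue_at s t x0 pre)).

Lemma value_atE (s t : strategy W) x0 n : value_at H s t x0 n = hvalue_at s t x0 [::] n.
Proof.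
suff: forall pre, \sum_(u : n.-tuple W) hprob H s t x0 pre u * sink_pay H (last x0 (pre ++ u))
   = hvalue_at s t x0 pre n by move/(_ [::]).
elim: n => [|n IHn] pre.
  rewrite (big_pred1 [tuple]) /= ?mul1r ?cats0 // => u.
  by rewrite [u]tuple0 /= eqxx.
rewrite sum_tupleS /=; apply: eq_bigr => y _.
by rewrite -IHn big_distrr; apply: eq_bigr => u _; rewrite /= -mulrA cat_rcons.
Qed.

Lemma play_valueE (s t : strategy W) x0 : play_value H s t x0 = hvalue s t x0 [::].
Proof. by rewrite /play_value /hvalue (funext (value_atE s t x0)). Qed.

Lemma hvalue_at_shift (s1 t1 s2 t2 : strategy W) x0 pre1 y :
  last x0 pre1 = y ->
  (forall s, s1 x0 (pre1 ++ s) = s2 y s) -> (forall s, t1 x0 (pre1 ++ s) = t2 y s) ->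
  forall s n, hvalue_at s1 t1 x0 (pre1 ++ s) n = hvalue_at s2 t2 y s n.
Proof.
move=> pre1y s12 t12 s n; elim: n s => [|n IHn] s /=; first by rewrite last_cat pre1y.
apply: eq_bigr => z _; rewrite rcons_cat IHn; congr (_ * _).
by rewrite /trans last_cat pre1y s12 t12.
Qed.

Lemma min_strategy_shift (t t0 : strategy W) x0 pre y :
  min_strategy H t -> min_strategy H t0 ->
  path (arc H) x0 pre -> arc H (last x0 pre) y ->
  min_strategy H (fun y0 s => if y0 == y then t x0 (rcons pre y ++ s) else t0 y0 s).
Proof.
move=> tmin t0min pre_path arc_y y0 s; case: eqP => [->|_]; last exact: t0min.
have lastE : last x0 (rcons pre y ++ s) = last y s by rewrite last_cat last_rcons.
move=> s_path; rewrite -lastE; apply: tmin.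
by rewrite cat_path rcons_path pre_path arc_y last_rcons.
Qed.

Lemma exists_min_strategy : nonblocking -> exists t, min_strategy H t.
Proof.
move=> nb; exists (fun x0 s => odflt (last x0 s) [pick y | arc H (last x0 s) y]).
move=> x0 s _ minx; case: pickP => [y //|no_arc].
by have [|y] := nb (last x0 s); rewrite ?minx ?no_arc.
Qed.

Lemma trans_arc (s t : strategy W) x0 pre y :
  max_strategy H s -> min_strategy H t -> path (arc H) x0 pre ->
  kind H (last x0 pre) <> VSink -> trans H s t x0 pre y != 0 -> arc H (last x0 pre) y.
Proof.
move=> smax tmin pre_path; rewrite /trans.
case k: kind => // _; [move: (smax _ _ pre_path k) | move: (tmin _ _ pre_path k) | ].
- by case: (eqVneq (s x0 pre) y) => [<- a _ //|_ _]; rewrite eqxx.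
- by case: (eqVneq (t x0 pre) y) => [<- a _ //|_ _]; rewrite eqxx.
- by case: ifP => //; rewrite eqxx.
Qed.

Hypothesis H_stoch : stochastic.

Lemma trans_ge0 s t x0 pre y : 0 <= trans H s t x0 pre y.
Proof.
case: H_stoch => prob_ge0 _ _; rewrite /trans.
case k: kind => //; case: ifP => // a; exact: prob_ge0.
Qed.

Lemma sum_trans s t x0 pre : \sum_y trans H s t x0 pre y = 1.
Proof.
case: H_stoch => _ prob_sum1 _; rewrite /trans.
case: kind (prob_sum1 (last x0 pre)) => [_|_|-> //|_]; rewrite ?sum_natr_eq //.
by rewrite -[RHS](sum_natr_eq _ (last x0 pre)); apply: eq_bigr => y _; rewrite eq_sym.
Qed.

Lemma ler_sum_trans (s t : strategy W) x0 pre (a b : W -> R) :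
  max_strategy H s -> min_strategy H t -> path (arc H) x0 pre ->
  kind H (last x0 pre) <> VSink -> (forall y, arc H (last x0 pre) y -> a y <= b y) ->
  \sum_y trans H s t x0 pre y * a y <= \sum_y trans H s t x0 pre y * b y.
Proof.
move=> smax tmin pre_path nsink ab; apply: ler_sum => y _.
have [->|/(trans_arc smax tmin pre_path nsink)/ab aby] := eqVneq (trans H s t x0 pre y) 0.
  by rewrite !mul0r.
by rewrite ler_wpM2l ?trans_ge0.
Qed.

Lemma sum_trans_addr s t x0 pre (a : W -> R) e :
  \sum_y trans H s t x0 pre y * (a y + e) = \sum_y trans H s t x0 pre y * a y + e.
Proof. by under eq_bigr do rewrite mulrDr; rewrite big_split -mulr_suml sum_trans mul1r. Qed.

Lemma sink_pay01 x : 0 <= sink_pay H x <= 1.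
Proof.
case: H_stoch => _ _ sval01; rewrite /sink_pay.
by case k: kind; rewrite ?lexx ?ler01 ?sval01.
Qed.

Lemma hvalue_at01 s t x0 pre n : 0 <= hvalue_at s t x0 pre n <= 1.
Proof.
elim: n pre => [|n IHn] pre /=; first exact: sink_pay01.
apply/andP; split.
  by apply: sumr_ge0 => y _; rewrite mulr_ge0 ?trans_ge0 //; case/andP: (IHn (rcons pre y)).
rewrite -[X in _ <= X](sum_trans s t x0 pre); apply: ler_sum => y _.
by rewrite ler_piMr ?trans_ge0 //; case/andP: (IHn (rcons pre y)).
Qed.

Lemma hvalue_at_sink s t x0 pre n : kind H (last x0 pre) = VSink ->
  hvalue_at s t x0 pre n = sink_pay H (last x0 pre).
Proof.
elim: n pre => [|n IHn] pre //= sink.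
rewrite /trans sink (eq_bigr (fun y => (last x0 pre == y)%:R * hvalue_at s t x0 (rcons pre y) n)).
  by rewrite sum_natr_eq_mul IHn last_rcons.
by move=> y _; rewrite eq_sym.
Qed.

Lemma hvalue_at_leS s t x0 pre n : hvalue_at s t x0 pre n <= hvalue_at s t x0 pre n.+1.
Proof.
elim: n pre => [|n IHn] pre; last first.
  by apply: ler_sum => y _; rewrite ler_wpM2l ?trans_ge0.
case sink: (kind H (last x0 pre)); last by rewrite (hvalue_at_sink _ _ 1).
all: by rewrite /= /sink_pay sink; case/andP: (hvalue_at01 s t x0 pre 1).
Qed.

Lemma hvalue_at_le s t x0 pre : {homo hvalue_at s t x0 pre : m n / (m <= n)%N >-> m <= n}.
Proof. exact: homo_leq (@lexx _ _) (@le_trans _ _) (hvalue_at_leS s t x0 pre). Qed.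

Lemma has_sup_hvalue s t x0 pre : has_sup (range (hvalue_at s t x0 pre)).
Proof.
split; first by exists (hvalue_at s t x0 pre 0), 0%N.
by exists 1 => _ [n _ <-]; case/andP: (hvalue_at01 s t x0 pre n).
Qed.

Lemma hvalue_at_le_hvalue s t x0 pre n : hvalue_at s t x0 pre n <= hvalue s t x0 pre.
Proof. by apply: sup_upper_bound; [exact: has_sup_hvalue | exists n]. Qed.

Lemma hvalue_le s t x0 pre c :
  (forall n, hvalue_at s t x0 pre n <= c) -> hvalue s t x0 pre <= c.
Proof.
move=> le_c; apply: ge_sup; first by exists (hvalue_at s t x0 pre 0), 0%N.
by move=> _ [n _ <-].
Qed.

Lemma hvalue01 s t x0 pre : 0 <= hvalue s t x0 pre <= 1.
Proof.
have [ge0 _] := andP (hvalue_at01 s t x0 pre 0).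
rewrite (le_trans ge0 (hvalue_at_le_hvalue _ _ _ _ _)) hvalue_le // => n.
by case/andP: (hvalue_at01 s t x0 pre n).
Qed.

Lemma hvalue_sink s t x0 pre : kind H (last x0 pre) = VSink ->
  hvalue s t x0 pre = sink_pay H (last x0 pre).
Proof.
move=> sink; apply/le_anti; rewrite hvalue_le => [|n]; last by rewrite hvalue_at_sink.
by rewrite -(hvalue_at_sink s t 0) ?hvalue_at_le_hvalue.
Qed.

Lemma hvalue_bellman s t x0 pre :
  hvalue s t x0 pre = \sum_y trans H s t x0 pre y * hvalue s t x0 (rcons pre y).
Proof.
apply/le_anti/andP; split.
  apply: hvalue_le => n; apply: le_trans (hvalue_at_leS _ _ _ _ _) _.
  by apply: ler_sum => y _; rewrite ler_wpM2l ?trans_ge0 ?hvalue_at_le_hvalue.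
apply/ler_addgt0Pr => e e_gt0.
have /choice [N approx] : forall y, exists n,
    hvalue s t x0 (rcons pre y) - e < hvalue_at s t x0 (rcons pre y) n.
  move=> y; have [_ [n _ <-]] := sup_adherent e_gt0 (has_sup_hvalue s t x0 (rcons pre y)).
  by exists n.
(* A single horizon, larger than every [N y], approximates all successors. *)
apply: (@le_trans _ _ (hvalue_at s t x0 pre (\max_y N y).+1 + e)).
  rewrite /= -[X in _ + X]mul1r -(sum_trans s t x0 pre) mulr_suml -big_split /=.
  apply: ler_sum => y _; rewrite -mulrDr ler_wpM2l ?trans_ge0 // -lerBlDr.
  by apply/ltW/(lt_le_trans (approx y))/hvalue_at_le/leq_bigmax.
by rewrite lerD2r hvalue_at_le_hvalue.
Qed.

End HistoryValues.

Section MaxValue.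
Variables (R : realType) (W : finType) (H : game R W) (s : strategy W) (x : W).
Hypotheses (H_stoch : stochastic H) (H_nb : nonblocking H).

Let responses := [set v | exists t, min_strategy H t /\ v = play_value H s t x].

Let responses0 : responses !=set0.
Proof. by have [t tmin] := exists_min_strategy H_nb; exists (play_value H s t x), t. Qed.

Let responses_ge0 : lbound responses 0.
Proof. by move=> _ [t [_ ->]]; rewrite play_valueE; case/andP: (hvalue01 H_stoch s t x [::]). Qed.

Lemma max_value_le t : min_strategy H t -> max_value H s x <= play_value H s t x.
Proof. by move=> tmin; apply: ge_inf; [exists 0; exact: responses_ge0 | exists t]. Qed.

Lemma lb_le_max_value c :
  (forall t, min_strategy H t -> c <= play_value H s t x) -> c <= max_value H s x.
Proof. by move=> lb; apply: lb_le_inf responses0 _ => _ [t [tmin ->]]; exact: lb. Qed.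

Lemma max_value_adherent e : 0 < e ->
  exists t, min_strategy H t /\ play_value H s t x <= max_value H s x + e.
Proof.
move=> e_gt0; have has_inf_responses : has_inf responses.
  by split; [exact: responses0 | exists 0; exact: responses_ge0].
by have [_ [t [tmin ->]] /ltW] := inf_adherent e_gt0 has_inf_responses; exists t.
Qed.

Lemma max_value01 : 0 <= max_value H s x <= 1.
Proof.
have [t tmin] := exists_min_strategy H_nb.
rewrite lb_le_max_value => [|t' t'min]; last by apply: responses_ge0; exists t'.
by rewrite (le_trans (max_value_le tmin)) // play_valueE; case/andP: (hvalue01 H_stoch s t x [::]).
Qed.

End MaxValue.

Section Crossing.
Variables (V : finType) (A : {set V * V}).

Definition crosses (x0 : V) (s : seq V) := has (fun e => e \in A) (hist_arcs x0 s).

Lemma hist_arcs_cons (x0 z : V) s : hist_arcs x0 (z :: s) = (x0, z) :: hist_arcs z s.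
Proof. by []. Qed.

Lemma hist_arcs_cat (x0 : V) s1 s2 :
  hist_arcs x0 (s1 ++ s2) = hist_arcs x0 s1 ++ hist_arcs (last x0 s1) s2.
Proof. by elim: s1 x0 => [|z s1 IHs] x0 //; rewrite cat_cons !hist_arcs_cons IHs. Qed.

Lemma size_hist_arcs (x0 : V) s : size (hist_arcs x0 s) = size s.
Proof. by rewrite size_zip /=; apply/minn_idPr/leqnSn. Qed.

Lemma crosses_cons x0 z s : crosses x0 (z :: s) = ((x0, z) \in A) || crosses z s.
Proof. by []. Qed.

Lemma crosses_rcons x0 pre y :
  crosses x0 (rcons pre y) = crosses x0 pre || ((last x0 pre, y) \in A).
Proof. by rewrite /crosses -cats1 hist_arcs_cat has_cat /= orbF. Qed.

Lemma crosses_split x0 s : crosses x0 s -> exists pre y s',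
  [/\ s = rcons pre y ++ s', ~~ crosses x0 pre & (last x0 pre, y) \in A].
Proof.
elim: s x0 => [|z s IHs] x0 //; rewrite crosses_cons.
have [zA _|zNA /= /IHs [pre [y [s' [-> pre_unc yA]]]]] := boolP ((x0, z) \in A).
  by exists [::], z, s.
by exists (z :: pre), y, s'; rewrite crosses_cons negb_or zNA.
Qed.

End Crossing.

Section Transform.
Variables (R : realType) (V : finType) (H : game R V) (A : {set V * V}) (w : V -> R).
Hypothesis A_arcs : A \subset arcs H.
Local Notation T := (transform H A w).

Definition tmove (c y : V) : tvert A := if insub (c, y) is Some e then inr e else inl y.

Definition tbase (u : tvert A) : V := match u with inl x => x | inr e => (val e).2 end.

Definition is_inl (u : tvert A) := if u is inl _ then true else false.

Variant tmove_spec (c y : V) : tvert A -> Type :=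
  | TmoveKeep of (c, y) \notin A : tmove_spec c y (inl y)
  | TmoveCut (e : {e : V * V | e \in A}) of (c, y) \in A & proj1_sig e = (c, y) :
      tmove_spec c y (inr e).

Lemma tmoveP c y : tmove_spec c y (tmove c y).
Proof. by rewrite /tmove; case: insubP => [e yA ve | nA]; constructor. Qed.

Lemma arc_of_A e : e \in A -> arc H e.1 e.2.
Proof. by move/(fintype.subsetP A_arcs); rewrite inE. Qed.

Lemma arc_tmove c y : arc H c y -> arc T (inl c) (tmove c y).
Proof.
move=> cy; case: tmoveP => [nA | e _ ve] /=; first by rewrite cy nA.
by apply/eqP; exact: (congr1 fst ve).
Qed.

Lemma arc_transform_inl c v : arc T (inl c) v -> arc H c (tbase v) /\ tmove c (tbase v) = v.
Proof.
case: v => [y /andP [cy nA] | e /eqP e1]; first by rewrite /tmove insubN.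
split; first by have := arc_of_A (valP e); rewrite e1.
by rewrite /tmove -e1 -surjective_pairing valK.
Qed.

Lemma path_transform x0 s :
  path (arc H) x0 s -> ~~ crosses A x0 s -> path (arc T) (inl x0) (map inl s).
Proof.
elim: s x0 => [|z s IHs] x0 //=; rewrite crosses_cons negb_or.
by move=> /andP [xz zs] /andP [xzNA zs_unc]; rewrite xz xzNA IHs.
Qed.

Lemma path_transform_inl u s : path (arc T) u s -> is_inl (last u s) ->
  is_inl u && path (arc H) (tbase u) (map tbase s).
Proof.
elim: s u => [|v s IHs] u /=; first by move=> _ ->.
move=> /andP [uv vs] /(IHs v vs) /andP [v_inl ->]; rewrite andbT.
case: u uv => [x /arc_transform_inl [] // | e].
by case: v v_inl {vs}.
Qed.

Definition lift_strategy (t : strategy V) : strategy (tvert A) :=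
  fun u s => tmove (tbase (last u s)) (t (tbase u) (map tbase s)).

Lemma lift_strategyE t x0 pre :
  lift_strategy t (inl x0) (map inl pre) = tmove (last x0 pre) (t x0 pre).
Proof. by rewrite /lift_strategy last_map /= (mapK (fun _ => erefl)). Qed.

Lemma min_strategy_lift t : min_strategy H t -> min_strategy T (lift_strategy t).
Proof.
move=> tmin u s us_path; rewrite /lift_strategy.
case last_us: (last u s) => [c|e] minc //.
have := path_transform_inl us_path; rewrite last_us => /(_ isT).
case: u us_path last_us => [x0 _ last_us /andP [_ path_H] | //].
have lastH : last x0 (map tbase s) = c by rewrite -[x0]/(tbase (inl x0)) last_map last_us.
by apply: arc_tmove; rewrite -lastH; apply: tmin; rewrite ?lastH.
Qed.

Lemma sum_cut_sinks c (F : {e : V * V | e \in A} -> R) :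
  \sum_e (if (val e).1 == c then F e else 0) =
  \sum_y (if insub (c, y) is Some e then F e else 0).
Proof.
transitivity (\sum_y \sum_e (if val e == (c, y) then F e else 0)); last first.
  apply: eq_bigr => y _; rewrite -big_mkcond; case: insubP => [e0 _ ve0 | nA].
    by rewrite (big_pred1 e0) // => e; rewrite -ve0 val_eqE.
  rewrite big_pred0 // => e; apply/eqP => ve.
  by rewrite -ve in nA; case/negP: nA; exact: valP.
rewrite exchange_big; apply: eq_bigr => e _; rewrite -big_mkcond.
have [e1|e1] := eqVneq (val e).1 c.
  rewrite (big_pred1 (val e).2) // => y.
  by rewrite {1}[val e]surjective_pairing xpair_eqE e1 eqxx eq_sym.
by rewrite big_pred0 // => y; apply: contraNF e1 => /eqP ->.
Qed.

Lemma sum_rand_transform c (f : tvert A -> R) :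
  \sum_u (if arc T (inl c) u then prob T (inl c) u else 0) * f u =
  \sum_y (if arc H c y then prob H c y else 0) * f (tmove c y).
Proof.
pose F (e : {e : V * V | e \in A}) := prob H c (val e).2 * f (inr e).
transitivity (\sum_y (if arc H c y && ((c, y) \notin A) then prob H c y else 0) * f (inl y) +
    \sum_y (if insub (c, y) is Some e then F e else 0)).
  rewrite big_sumType -sum_cut_sinks /=; congr (_ + _).
  by apply: eq_bigr => e _; case: eqP => _; rewrite ?mul0r.
rewrite -big_split; apply: eq_bigr => y _; rewrite /tmove.
case: insubP => [e eA ve | nA] /=; last by rewrite nA andbT addr0.
by rewrite eA andbF mul0r add0r (arc_of_A eA) /F ve.
Qed.

Lemma nonblocking_transform : nonblocking H -> nonblocking T.
Proof. by move=> nb [x|//] /nb [y xy]; exists (tmove x y); exact: arc_tmove. Qed.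

Lemma stochastic_transform :
  stochastic H -> (forall y, 0 <= w y <= 1) -> stochastic T.
Proof.
case=> prob_ge0 prob_sum1 sval01 w01; split.
- move=> [x|e] [y|e'] //= randx; first by case/andP => xy _; exact: prob_ge0.
  move=> /eqP e'1; rewrite e'1 eqxx prob_ge0 //.
  by have := arc_of_A (valP e'); rewrite e'1.
- move=> [x|//] randx; rewrite -(prob_sum1 x randx).
  rewrite (eq_bigr (fun u => (if arc T (inl x) u then prob T (inl x) u else 0) * 1)).
    by rewrite sum_rand_transform; apply: eq_bigr => y _; rewrite mulr1.
  by move=> u _; rewrite mulr1.
- by move=> [x|e] /=; [exact: sval01 | rewrite w01].
Qed.

Lemma trans_transform (s t : strategy V) (sT tT : strategy (tvert A)) x0 pre f :
  let c := last x0 pre in kind H c <> VSink ->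
  (kind H c = VMax -> sT (inl x0) (map inl pre) = tmove c (s x0 pre)) ->
  (kind H c = VMin -> tT (inl x0) (map inl pre) = tmove c (t x0 pre)) ->
  \sum_u trans T sT tT (inl x0) (map inl pre) u * f u =
  \sum_y trans H s t x0 pre y * f (tmove c y).
Proof.
rewrite /trans last_map /=; case: kind => // _ sTE tTE.
- by rewrite sum_natr_eq_mul (sum_natr_eq_mul _ (f \o tmove _)) sTE.
- by rewrite sum_natr_eq_mul (sum_natr_eq_mul _ (f \o tmove _)) tTE.
- exact: sum_rand_transform.
Qed.

End Transform.

Arguments lift_strategy {V} A t.

Section Concatenation.
Variables (R : realType) (V : finType) (H : game R V) (A : {set V * V}) (sigma sigma' : V -> V).
Hypotheses (H_stoch : stochastic H) (H_nb : nonblocking H) (A_arcs : A \subset arcs H).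
Hypotheses (sigma_max : pos_max_strategy H sigma) (sigma'_max : pos_max_strategy H sigma').

Local Notation w := (max_value H (positional sigma)).
Local Notation T := (transform H A w).
Local Notation sc := (concat_strat A sigma' sigma).
Local Notation sT := (positional (lift_pos A sigma')).

Lemma concat_strat_uncrossed x0 pre : ~~ crosses A x0 pre -> sc x0 pre = sigma' (last x0 pre).
Proof. by move=> unc; rewrite /concat_strat -/(crosses A x0 pre) (negbTE unc). Qed.

Lemma concat_strat_crossed x0 pre s :
  crosses A x0 pre -> sc x0 (pre ++ s) = sigma (last x0 (pre ++ s)).
Proof. by move=> cr; rewrite /concat_strat hist_arcs_cat has_cat -/(crosses A x0 pre) cr. Qed.

Lemma max_strategy_concat : max_strategy H sc.
Proof.
by move=> x0 s _ maxx; rewrite /concat_strat; case: ifP => _; [exact: sigma_max | exact: sigma'_max].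
Qed.

Lemma stochastic_T : stochastic T.
Proof. by apply: stochastic_transform => // y; exact: max_value01. Qed.

Lemma trans_concat (t : strategy V) (tT : strategy (tvert A)) x0 pre f :
  ~~ crosses A x0 pre -> kind H (last x0 pre) <> VSink ->
  (kind H (last x0 pre) = VMin -> tT (inl x0) (map inl pre) = tmove A (last x0 pre) (t x0 pre)) ->
  \sum_u trans T sT tT (inl x0) (map inl pre) u * f u =
  \sum_y trans H sc t x0 pre y * f (tmove A (last x0 pre) y).
Proof.
move=> unc nsink tTE; apply: trans_transform => // _.
by rewrite concat_strat_uncrossed // /positional last_map.
Qed.

Lemma hvalue_crossed (t t' : strategy V) x0 pre y :
  ~~ crosses A x0 pre -> (last x0 pre, y) \in A -> (forall s, t x0 (rcons pre y ++ s) = t' y s) ->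
  hvalue H sc t x0 (rcons pre y) = play_value H (positional sigma) t' y.
Proof.
move=> unc yA tt'.
have shift n :
    hvalue_at H sc t x0 (rcons pre y ++ [::]) n = hvalue_at H (positional sigma) t' y [::] n.
  apply: hvalue_at_shift => [|s|//]; first exact: last_rcons.
  by rewrite concat_strat_crossed ?crosses_rcons ?yA ?orbT // /positional last_cat last_rcons.
by rewrite play_valueE /hvalue -(funext shift) cats0.
Qed.

Section TransformLe.
Variable t : strategy V.
Hypothesis t_min : min_strategy H t.

Lemma hvalue_at_lift_le n x0 pre : path (arc H) x0 pre -> ~~ crosses A x0 pre ->
  hvalue_at T sT (lift_strategy A t) (inl x0) (map inl pre) n <= hvalue H sc t x0 pre.
Proof.
elim: n x0 pre => [|n IHn] x0 pre pre_path unc.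
  by rewrite /= last_map; exact: (hvalue_at_le_hvalue H_stoch sc t x0 pre 0).
have [sink|nsink] := pselect (kind H (last x0 pre) = VSink).
  by rewrite hvalue_at_sink last_map // hvalue_sink.
rewrite /= (trans_concat (t := t) _ unc nsink) => [|_]; last exact: lift_strategyE.
rewrite hvalue_bellman //; apply: ler_sum_trans => // [|y xy]; first exact: max_strategy_concat.
case: tmoveP => [yNA | e yA ve].
  rewrite -map_rcons; apply: IHn; first by rewrite rcons_path pre_path xy.
  by rewrite crosses_rcons negb_or unc yNA.
rewrite hvalue_at_sink ?last_rcons // /sink_pay /= ve /=.
have [t0 t0_min] := exists_min_strategy H_nb.
set t' := fun y0 s => if y0 == y then t x0 (rcons pre y ++ s) else t0 y0 s.
rewrite (@hvalue_crossed t t') //.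
  by apply: max_value_le => //; exact: min_strategy_shift.
by move=> s; rewrite /t' eqxx.
Qed.

End TransformLe.

Lemma max_value_transform_le x : max_value T sT (inl x) <= max_value H sc x.
Proof.
apply: lb_le_max_value => // t t_min.
have tT_min : min_strategy T (lift_strategy A t) by exact: min_strategy_lift.
apply: le_trans (max_value_le _ _ stochastic_T tT_min) _.
by rewrite !play_valueE; apply: hvalue_le => n; exact: (hvalue_at_lift_le t_min n (pre := [::])).
Qed.

Section ConcatLe.
Variables (tT : strategy (tvert A)) (eps : R) (ts : V -> strategy V).
Hypotheses (tT_min : min_strategy T tT) (eps_gt0 : 0 < eps).
Hypothesis ts_approx :
  forall y, min_strategy H (ts y) /\ play_value H (positional sigma) (ts y) y <= w y + eps.

(* Follow [tT] until the first arc of [A], say into [y], then play [ts y] from [y]. *)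
Definition glue : strategy V := fun x0 s =>
  let i := find (fun e => e \in A) (hist_arcs x0 s) in
  if (i < size s)%N then ts (nth x0 s i) (nth x0 s i) (drop i.+1 s)
  else tbase (tT (inl x0) (map inl s)).

Lemma glue_uncrossed x0 s : ~~ crosses A x0 s -> glue x0 s = tbase (tT (inl x0) (map inl s)).
Proof. by move=> unc; rewrite /glue (hasNfind unc) size_hist_arcs ltnn. Qed.

Lemma glue_crossed x0 pre y s : ~~ crosses A x0 pre -> (last x0 pre, y) \in A ->
  glue x0 (rcons pre y ++ s) = ts y y s.
Proof.
move=> unc yA.
have first_cross : find (fun e => e \in A) (hist_arcs x0 (rcons pre y ++ s)) = size pre.
  rewrite -cats1 -catA !hist_arcs_cat find_cat -/(crosses A x0 pre) (negbTE unc).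
  by rewrite size_hist_arcs /= yA addn0.
rewrite /glue first_cross size_cat size_rcons leq_addr.
rewrite nth_cat size_rcons ltnSn nth_rcons ltnn eqxx.
by rewrite drop_cat size_rcons ltnn subnn drop0.
Qed.

Lemma glue_uncrossed_min x0 pre : path (arc H) x0 pre -> ~~ crosses A x0 pre ->
  kind H (last x0 pre) = VMin ->
  arc H (last x0 pre) (glue x0 pre) /\
  tmove A (last x0 pre) (glue x0 pre) = tT (inl x0) (map inl pre).
Proof.
move=> pre_path unc minx; rewrite glue_uncrossed //; apply: (arc_transform_inl (w := w) A_arcs).
by have := tT_min (path_transform w pre_path unc); rewrite last_map => /(_ minx).
Qed.

Lemma min_strategy_glue : min_strategy H glue.
Proof.
move=> x0 s; have [cr|unc] := boolP (crosses A x0 s); last first.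
  by move=> s_path minx; case: (glue_uncrossed_min s_path unc minx).
have [pre [y [s' [-> unc yA]]]] := crosses_split cr.
rewrite cat_path last_cat last_rcons glue_crossed // => /andP [_ s'_path].
by have [ts_min _] := ts_approx y; exact: ts_min.
Qed.

Lemma hvalue_at_glue_le n x0 pre : path (arc H) x0 pre -> ~~ crosses A x0 pre ->
  hvalue_at H sc glue x0 pre n <= hvalue T sT tT (inl x0) (map inl pre) + eps.
Proof.
elim: n x0 pre => [|n IHn] x0 pre pre_path unc.
  rewrite -[hvalue_at _ _ _ _ _ _]addr0 lerD ?(ltW eps_gt0) //.
  by have := hvalue_at_le_hvalue stochastic_T sT tT (inl x0) (map inl pre) 0; rewrite /= last_map.
have [sink|nsink] := pselect (kind H (last x0 pre) = VSink).
  by rewrite hvalue_at_sink // -(hvalue_at_sink sc glue n sink) IHn.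
rewrite /= (hvalue_bellman stochastic_T) (trans_concat (t := glue) _ unc nsink); last first.
  by move=> minx; case: (glue_uncrossed_min pre_path unc minx).
rewrite -sum_trans_addr //; apply: ler_sum_trans => // [||y xy].
- exact: max_strategy_concat.
- exact: min_strategy_glue.
case: tmoveP => [yNA | e yA ve].
  rewrite -map_rcons; apply: IHn; first by rewrite rcons_path pre_path xy.
  by rewrite crosses_rcons negb_or unc yNA.
rewrite (hvalue_sink stochastic_T) ?last_rcons // /sink_pay /= ve /=.
have [_ ts_le] := ts_approx y; apply: le_trans ts_le.
rewrite -(@hvalue_crossed glue (ts y) x0 pre y unc yA) => [|s]; last exact: glue_crossed.
exact: hvalue_at_le_hvalue.
Qed.

End ConcatLe.

Lemma max_value_le_transform x : max_value H sc x <= max_value T sT (inl x).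
Proof.
apply/ler_addgt0Pr => eps eps_gt0; rewrite -lerBlDr.
apply: (lb_le_max_value (nonblocking_transform H_nb)) => tT tT_min.
rewrite lerBlDr.
have /choice [ts ts_approx] : forall y, exists t,
    min_strategy H t /\ play_value H (positional sigma) t y <= w y + eps.
  by move=> y; exact: max_value_adherent.
apply: le_trans (max_value_le _ _ H_stoch (min_strategy_glue tT_min ts_approx)) _.
rewrite !play_valueE; apply: hvalue_le => n.
exact: (hvalue_at_glue_le tT_min eps_gt0 ts_approx n (pre := [::])).
Qed.

End Concatenation.

Section Realize.
Variables (R : realType) (V : finType) (G : ssg V).
Hypothesis G_wf : ssg_wf G.

Lemma stochastic_realize : stochastic (realize R G).
Proof.
case: G_wf => _ _ _ rand_distr sval01; split=> /=.
- by move=> x y /rand_distr [prob_gt0 _] /prob_gt0 /ltW; rewrite ler0q.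
- move=> x /rand_distr [_ sum1].
  by rewrite -big_mkcond /= -rmorph_sum sum1 rmorph1.
- move=> x /sval01 /andP [ge0 le1].
  by rewrite ler0q ge0 /= -(rmorph1 (@ratr R)) ler_rat.
Qed.

Lemma nonblocking_realize : nonblocking (realize R G).
Proof. by case: G_wf. Qed.

End Realize.

Unset Implicit Arguments.

Theorem lemma16 (R : realType) (V : finType) (G : ssg V) (A : {set V * V})
    (sigma sigma' : V -> V) :
  ssg_wf G ->
  A \subset arcs G ->
  pos_max_strategy G sigma ->
  pos_max_strategy G sigma' ->
  forall x : V,
    max_value (realize R G) (concat_strat A sigma' sigma) x =
    max_value
      (transform (realize R G) A (max_value (realize R G) (positional sigma)))
      (positional (lift_pos A sigma')) (inl x).
Proof.
move=> G_wf A_arcs sigma_max sigma'_max x.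
have G_stoch : stochastic (realize R G) by exact: stochastic_realize.
have G_nb : nonblocking (realize R G) by exact: nonblocking_realize.
by apply/le_anti; rewrite max_value_le_transform ?max_value_transform_le.
Qed.
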